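(* Let $\mathfrak{A}$ be a unital $\mathrm{C}^*$-algebra and $\mathfrak{S}\subset\mathfrak{A}$ an operator system. Let $\pi:\mathfrak{A}\to B(\mathcal{H})$ be a unital $*$-representation and $\Pi:\mathfrak{A}\to B(\mathcal{H})$ a unital completely positive map with $\Pi|_{\mathfrak{S}}=\pi|_{\mathfrak{S}}$. Let $\psi$ be a state on $\mathfrak{A}$ admitting a characteristic sequence $(\Delta_n)_n$ with $\Delta_n\in\mathfrak{S}$ for all $n$. Then $\limsup_{n\to\infty}\|\Pi(a)\pi(\Delta_n)\|\le\psi(a^*a)^{1/2}$ for every $a\in\mathfrak{A}$. Furthermore, $\lim_{n\to\infty}\|\pi(\Delta_n)^*\Pi(a)\pi(\Delta_n)\|=0$ for every self-adjoint $a\in\mathfrak{A}$ with $\psi(a)=0$.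
   Context: An operator system is a unital self-adjoint subspace of $\mathfrak{A}$. A sequence $(\Delta_n)_n$ in $\mathfrak{A}$ is a characteristic sequence for a state $\psi$ if (a) $\|\Delta_n\|=1$ for all $n$, (b) $\lim_{n\to\infty}\psi(\Delta_n)=1$, and (c) $\limsup_{n\to\infty}\|\Delta_n^*a\Delta_n\|\le|\psi(a)|$ for every $a\in\mathfrak{A}$. *)

From Stdlib Require Import Reals ClassicalEpsilon.
Open Scope R_scope.

Record Cplx := mkC { Cre : R; Cim : R }.
Definition C0 : Cplx := mkC 0 0.
Definition C1 : Cplx := mkC 1 0.
Definition CofR (r : R) : Cplx := mkC r 0.
Definition Cadd (a b : Cplx) : Cplx := mkC (Cre a + Cre b) (Cim a + Cim b).
Definition Cmul (a b : Cplx) : Cplx :=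
  mkC (Cre a * Cre b - Cim a * Cim b) (Cre a * Cim b + Cim a * Cre b).
Definition Cconj (a : Cplx) : Cplx := mkC (Cre a) (- Cim a).
Definition Cabs (a : Cplx) : R := sqrt (Cre a * Cre a + Cim a * Cim a).
Fixpoint Csum (n : nat) (f : nat -> Cplx) : Cplx :=
  match n with O => C0 | S k => Cadd (Csum k f) (f k) end.

Record CStarAlgebra := {
  ca_car :> Type;
  ca_zero : ca_car; ca_one : ca_car;
  ca_add : ca_car -> ca_car -> ca_car;
  ca_opp : ca_car -> ca_car;
  ca_scal : Cplx -> ca_car -> ca_car;
  ca_mul : ca_car -> ca_car -> ca_car;
  ca_star : ca_car -> ca_car;
  ca_norm : ca_car -> R;
  ca_addA : forall x y z, ca_add x (ca_add y z) = ca_add (ca_add x y) z;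
  ca_addC : forall x y, ca_add x y = ca_add y x;
  ca_add0 : forall x, ca_add x ca_zero = x;
  ca_addN : forall x, ca_add x (ca_opp x) = ca_zero;
  ca_scalA : forall a b x, ca_scal a (ca_scal b x) = ca_scal (Cmul a b) x;
  ca_scal1 : forall x, ca_scal C1 x = x;
  ca_scalDr : forall a x y, ca_scal a (ca_add x y) = ca_add (ca_scal a x) (ca_scal a y);
  ca_scalDl : forall a b x, ca_scal (Cadd a b) x = ca_add (ca_scal a x) (ca_scal b x);
  ca_mulA : forall x y z, ca_mul x (ca_mul y z) = ca_mul (ca_mul x y) z;
  ca_mul1l : forall x, ca_mul ca_one x = x;
  ca_mul1r : forall x, ca_mul x ca_one = x;
  ca_mulDl : forall x y z, ca_mul (ca_add x y) z = ca_add (ca_mul x z) (ca_mul y z);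
  ca_mulDr : forall x y z, ca_mul x (ca_add y z) = ca_add (ca_mul x y) (ca_mul x z);
  ca_scal_mull : forall a x y, ca_mul (ca_scal a x) y = ca_scal a (ca_mul x y);
  ca_scal_mulr : forall a x y, ca_mul x (ca_scal a y) = ca_scal a (ca_mul x y);
  ca_starK : forall x, ca_star (ca_star x) = x;
  ca_starD : forall x y, ca_star (ca_add x y) = ca_add (ca_star x) (ca_star y);
  ca_starZ : forall a x, ca_star (ca_scal a x) = ca_scal (Cconj a) (ca_star x);
  ca_starM : forall x y, ca_star (ca_mul x y) = ca_mul (ca_star y) (ca_star x);
  ca_norm_ge0 : forall x, 0 <= ca_norm x;
  ca_norm_eq0 : forall x, ca_norm x = 0 -> x = ca_zero;
  ca_norm_triangle : forall x y, ca_norm (ca_add x y) <= ca_norm x + ca_norm y;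
  ca_normZ : forall a x, ca_norm (ca_scal a x) = Cabs a * ca_norm x;
  ca_normM : forall x y, ca_norm (ca_mul x y) <= ca_norm x * ca_norm y;
  ca_cstar : forall x, ca_norm (ca_mul (ca_star x) x) = ca_norm x * ca_norm x;
  ca_complete : forall u : nat -> ca_car,
    (forall eps, eps > 0 -> exists N, forall m n, (m >= N)%nat -> (n >= N)%nat ->
        ca_norm (ca_add (u m) (ca_opp (u n))) < eps) ->
    exists l, forall eps, eps > 0 -> exists N, forall n, (n >= N)%nat ->
        ca_norm (ca_add (u n) (ca_opp l)) < eps
}.

Arguments ca_zero {_}. Arguments ca_one {_}. Arguments ca_add {_}.
Arguments ca_opp {_}. Arguments ca_scal {_}. Arguments ca_mul {_}.
Arguments ca_star {_}. Arguments ca_norm {_}.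

(* ---------- complex Hilbert spaces (inner product linear in 1st arg) ---- *)
Record HilbertSpace := {
  hs_car :> Type;
  hs_zero : hs_car;
  hs_add : hs_car -> hs_car -> hs_car;
  hs_opp : hs_car -> hs_car;
  hs_scal : Cplx -> hs_car -> hs_car;
  hs_inner : hs_car -> hs_car -> Cplx;
  hs_addA : forall x y z, hs_add x (hs_add y z) = hs_add (hs_add x y) z;
  hs_addC : forall x y, hs_add x y = hs_add y x;
  hs_add0 : forall x, hs_add x hs_zero = x;
  hs_addN : forall x, hs_add x (hs_opp x) = hs_zero;
  hs_scalA : forall a b x, hs_scal a (hs_scal b x) = hs_scal (Cmul a b) x;
  hs_scal1 : forall x, hs_scal C1 x = x;
  hs_scalDr : forall a x y, hs_scal a (hs_add x y) = hs_add (hs_scal a x) (hs_scal a y);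
  hs_scalDl : forall a b x, hs_scal (Cadd a b) x = hs_add (hs_scal a x) (hs_scal b x);
  hs_innerD : forall x y z, hs_inner (hs_add x y) z = Cadd (hs_inner x z) (hs_inner y z);
  hs_innerZ : forall a x y, hs_inner (hs_scal a x) y = Cmul a (hs_inner x y);
  hs_inner_conj : forall x y, hs_inner y x = Cconj (hs_inner x y);
  hs_inner_pos : forall x, 0 <= Cre (hs_inner x x);
  hs_inner_def : forall x, Cre (hs_inner x x) = 0 -> x = hs_zero;
  hs_complete : forall u : nat -> hs_car,
    (forall eps, eps > 0 -> exists N, forall m n, (m >= N)%nat -> (n >= N)%nat ->
        sqrt (Cre (hs_inner (hs_add (u m) (hs_opp (u n))) (hs_add (u m) (hs_opp (u n))))) < eps) ->
    exists l, forall eps, eps > 0 -> exists N, forall n, (n >= N)%nat ->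
        sqrt (Cre (hs_inner (hs_add (u n) (hs_opp l)) (hs_add (u n) (hs_opp l)))) < eps
}.

Arguments hs_zero {_}. Arguments hs_add {_}. Arguments hs_opp {_}.
Arguments hs_scal {_}. Arguments hs_inner {_}.

Definition hnorm {H : HilbertSpace} (x : H) : R := sqrt (Cre (hs_inner x x)).

Definition is_linear_op {H : HilbertSpace} (T : H -> H) : Prop :=
  (forall x y, T (hs_add x y) = hs_add (T x) (T y)) /\
  (forall a x, T (hs_scal a x) = hs_scal a (T x)).

Definition is_bounded_op {H : HilbertSpace} (T : H -> H) : Prop :=
  is_linear_op T /\ exists c, forall x, hnorm (T x) <= c * hnorm x.

Definition opnorm_le {H : HilbertSpace} (T : H -> H) (c : R) : Prop :=
  forall x, hnorm (T x) <= c * hnorm x.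

(* the Hilbert-space adjoint T^* (exists and is unique for bounded T) *)
Definition adjoint {H : HilbertSpace} (T : H -> H) : H -> H :=
  epsilon (inhabits (fun x : H => x))
    (fun S => forall x y, hs_inner (T x) y = hs_inner x (S y)).

Definition is_linear_map {A : CStarAlgebra} {H : HilbertSpace} (f : A -> H -> H) : Prop :=
  (forall a b x, f (ca_add a b) x = hs_add (f a x) (f b x)) /\
  (forall c a x, f (ca_scal c a) x = hs_scal c (f a x)).

Definition is_unital_star_rep {A : CStarAlgebra} {H : HilbertSpace} (pi : A -> H -> H) : Prop :=
  (forall a, is_bounded_op (pi a)) /\
  is_linear_map pi /\
  (forall a b x, pi (ca_mul a b) x = pi a (pi b x)) /\
  (forall x, pi ca_one x = x) /\
  (forall a x y, hs_inner (pi (ca_star a) x) y = hs_inner x (pi a y)).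

(* positive elements of M_n(A): matrices of the form X^* X, X in M_n(A) *)
Definition Asum {A : CStarAlgebra} (n : nat) (f : nat -> A) : A :=
  (fix s k := match k with O => ca_zero | S k' => ca_add (s k') (f k') end) n.

Definition is_pos_matrix {A : CStarAlgebra} (n : nat) (M : nat -> nat -> A) : Prop :=
  exists X : nat -> nat -> A, forall i j, (i < n)%nat -> (j < n)%nat ->
    M i j = Asum n (fun k => ca_mul (ca_star (X k i)) (X k j)).

(* unital completely positive map: each amplification Pi_n maps positive
   matrices of M_n(A) to positive operators on H^n *)
Definition is_ucp {A : CStarAlgebra} {H : HilbertSpace} (P : A -> H -> H) : Prop :=
  (forall a, is_bounded_op (P a)) /\
  is_linear_map P /\
  (forall x, P ca_one x = x) /\
  (forall (n : nat) (M : nat -> nat -> A) (xi : nat -> H),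
     is_pos_matrix n M ->
     let q := Csum n (fun i => Csum n (fun j => hs_inner (P (M i j) (xi j)) (xi i))) in
     Cim q = 0 /\ 0 <= Cre q).

Definition is_operator_system {A : CStarAlgebra} (S : A -> Prop) : Prop :=
  S ca_zero /\ S ca_one /\
  (forall a b, S a -> S b -> S (ca_add a b)) /\
  (forall c a, S a -> S (ca_scal c a)) /\
  (forall a, S a -> S (ca_star a)).

Definition is_state {A : CStarAlgebra} (psi : A -> Cplx) : Prop :=
  (forall a b, psi (ca_add a b) = Cadd (psi a) (psi b)) /\
  (forall c a, psi (ca_scal c a) = Cmul c (psi a)) /\
  (forall a, Cim (psi (ca_mul (ca_star a) a)) = 0 /\
             0 <= Cre (psi (ca_mul (ca_star a) a))) /\
  psi ca_one = C1.

Definition limsup_le (u : nat -> R) (L : R) : Prop :=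
  forall eps, eps > 0 -> exists N, forall n, (n >= N)%nat -> u n <= L + eps.

Definition is_characteristic_sequence {A : CStarAlgebra} (psi : A -> Cplx)
    (D : nat -> A) : Prop :=
  (forall n, ca_norm (D n) = 1) /\
  Un_cv (fun n => Cre (psi (D n))) 1 /\ Un_cv (fun n => Cim (psi (D n))) 0 /\
  (forall a, limsup_le (fun n => ca_norm (ca_mul (ca_mul (ca_star (D n)) a) (D n)))
                       (Cabs (psi a))).

(* The Schwarz defect [<Pi(u^* u) z, z> - ||Pi(u) z||^2] of a UCP map is a positive form,
   so by Cauchy-Schwarz [||Pi(a D) z - Pi(a) Pi(D) z||^2 <= ||a||^2 * defect(D, z)]; when
   [Pi(D) = pi(D)] and [||D|| <= 1], the defect of [D] at [z] is at most
   [2 ||z - pi(D) z|| ||z||].  For a characteristic sequence,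
   [psi((1 - D_m)^*(1 - D_m)) <= 2 - 2 Re psi(D_m)] makes [||(1 - D_m) D_n||] small for a
   suitable [m] and all large [n], so [pi(D_m)] almost fixes the range of [pi(D_n)] and
   [Pi(a) pi(D_n) ~ Pi(a D_m) pi(D_n)].  Hence [||Pi(a) pi(D_n)|| <~ ||a D_m||
   = ||D_m^* a^* a D_m||^(1/2) <~ psi(a^* a)^(1/2)], and compressing once more on the left,
   [||pi(D_n)^* Pi(a) pi(D_n)|| <~ ||D_m^* a D_m|| <~ |psi(a)|].
   The norm bounds for states, UCP maps and representations all come from
   [f(c^* c) <= ||c||^2 f(1)] for positive functionals, proved by taking a square root of
   [1 - h] for self-adjoint [h] with [||h|| < 1]. *)

From Pilot Require Import Defs.
From Stdlib Require Import Reals ClassicalEpsilon Lra Psatz.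
Open Scope R_scope.

Arguments ca_addA {_}. Arguments ca_addC {_}. Arguments ca_add0 {_}.
Arguments ca_addN {_}. Arguments ca_scalA {_}. Arguments ca_scal1 {_}.
Arguments ca_scalDr {_}. Arguments ca_scalDl {_}. Arguments ca_mulA {_}.
Arguments ca_mul1l {_}. Arguments ca_mul1r {_}. Arguments ca_mulDl {_}.
Arguments ca_mulDr {_}. Arguments ca_scal_mull {_}. Arguments ca_scal_mulr {_}.
Arguments ca_starK {_}. Arguments ca_starD {_}. Arguments ca_starZ {_}.
Arguments ca_starM {_}. Arguments ca_norm_ge0 {_}. Arguments ca_norm_eq0 {_}.
Arguments ca_norm_triangle {_}. Arguments ca_normZ {_}. Arguments ca_normM {_}.
Arguments ca_cstar {_}. Arguments ca_complete {_}.
Arguments hs_addA {_}. Arguments hs_addC {_}. Arguments hs_add0 {_}.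
Arguments hs_addN {_}. Arguments hs_scalA {_}. Arguments hs_scal1 {_}.
Arguments hs_scalDr {_}. Arguments hs_scalDl {_}. Arguments hs_innerD {_}.
Arguments hs_innerZ {_}. Arguments hs_inner_conj {_}. Arguments hs_inner_pos {_}.

Lemma Cplx_ext (a b : Cplx) : Cre a = Cre b -> Cim a = Cim b -> a = b.
Proof. destruct a, b; simpl; intros; subst; reflexivity. Qed.

Ltac Cplx_eq := apply Cplx_ext; simpl; try ring; try field.

Lemma Cabs_CofR r : Cabs (CofR r) = Rabs r.
Proof.
  unfold Cabs; simpl. replace (r * r + 0 * 0) with (Rsqr r) by (unfold Rsqr; ring).
  apply sqrt_Rsqr_abs.
Qed.

Lemma Cabs_C0 : Cabs C0 = 0.
Proof. unfold Cabs; simpl. replace (0 * 0 + 0 * 0) with 0 by ring. apply sqrt_0. Qed.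

Lemma Cabs_ge0 (z : Cplx) : 0 <= Cabs z.
Proof. apply sqrt_pos. Qed.

Lemma Cabs_real (z : Cplx) : Cim z = 0 -> 0 <= Cre z -> Cabs z = Cre z.
Proof.
  intros I P. unfold Cabs. rewrite I.
  replace (Cre z * Cre z + 0 * 0) with (Rsqr (Cre z)) by (unfold Rsqr; ring).
  apply sqrt_Rsqr, P.
Qed.

Lemma Rle_of_sqr_le (x y : R) : x * x <= y * y -> 0 <= y -> x <= y.
Proof. intros. apply Rsqr_incr_0_var; unfold Rsqr; assumption. Qed.

Lemma Rle_of_sqr_le_mul (x c : R) : 0 <= x -> 0 <= c -> x * x <= c * x -> x <= c.
Proof.
  intros Hx Hc E. destruct (Req_dec x 0) as [->|Z]; [lra|].
  apply (Rmult_le_reg_r x); lra.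
Qed.

Section CStarAlgebraTheory.
Context {A : CStarAlgebra}.

Definition ca_sub (x y : A) : A := ca_add x (ca_opp y).

Lemma ca_add0l (x : A) : ca_add ca_zero x = x.
Proof. rewrite ca_addC. apply ca_add0. Qed.

Lemma ca_addI (x y z : A) : ca_add x y = ca_add x z -> y = z.
Proof.
  intros E. rewrite <- (ca_add0l y), <- (ca_add0l z), <- (ca_addN x), (ca_addC x (ca_opp x)).
  rewrite <- !ca_addA, E. reflexivity.
Qed.

Lemma ca_scal0 (x : A) : ca_scal C0 x = ca_zero.
Proof. apply (ca_addI (ca_scal C0 x)). rewrite ca_add0, <- ca_scalDl. f_equal. Cplx_eq. Qed.

Lemma ca_oppE (x : A) : ca_opp x = ca_scal (CofR (-1)) x.
Proof.
  apply (ca_addI x). rewrite ca_addN. rewrite <- (ca_scal1 x) at 1.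
  rewrite <- ca_scalDl, <- (ca_scal0 x). f_equal. Cplx_eq.
Qed.

Lemma ca_mul0l (x : A) : ca_mul ca_zero x = ca_zero.
Proof. apply (ca_addI (ca_mul ca_zero x)). rewrite ca_add0, <- ca_mulDl, ca_add0. reflexivity. Qed.

Lemma ca_star0 : ca_star (@ca_zero A) = ca_zero.
Proof.
  rewrite <- (ca_scal0 ca_zero) at 1. rewrite ca_starZ.
  replace (Cconj C0) with C0 by Cplx_eq. apply ca_scal0.
Qed.

Lemma ca_star1 : ca_star (@ca_one A) = ca_one.
Proof.
  rewrite <- (ca_mul1r (ca_star ca_one)), <- (ca_starK (ca_mul (ca_star ca_one) ca_one)).
  rewrite ca_starM, ca_starK, ca_mul1r. apply ca_starK.
Qed.

Lemma ca_mulrN (x y : A) : ca_mul x (ca_opp y) = ca_opp (ca_mul x y).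
Proof. rewrite !ca_oppE, ca_scal_mulr. reflexivity. Qed.

Lemma ca_mulNr (x y : A) : ca_mul (ca_opp x) y = ca_opp (ca_mul x y).
Proof. rewrite !ca_oppE, ca_scal_mull. reflexivity. Qed.

Lemma ca_starN (x : A) : ca_star (ca_opp x) = ca_opp (ca_star x).
Proof. rewrite !ca_oppE, ca_starZ. f_equal. Cplx_eq. Qed.

Lemma ca_oppD (x y : A) : ca_opp (ca_add x y) = ca_add (ca_opp x) (ca_opp y).
Proof. rewrite !ca_oppE, ca_scalDr. reflexivity. Qed.

Lemma ca_oppK (x : A) : ca_opp (ca_opp x) = x.
Proof.
  rewrite !ca_oppE, ca_scalA.
  replace (Cmul (CofR (-1)) (CofR (-1))) with Defs.C1 by Cplx_eq. apply ca_scal1.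
Qed.

Lemma ca_star_sub (x y : A) : ca_star (ca_sub x y) = ca_sub (ca_star x) (ca_star y).
Proof. unfold ca_sub. rewrite ca_starD, ca_starN. reflexivity. Qed.

Lemma ca_subr0 (x : A) : ca_sub x ca_zero = x.
Proof. unfold ca_sub. rewrite <- (ca_add0l (ca_opp ca_zero)), ca_addN. apply ca_add0. Qed.

Lemma ca_subKr (x y z : A) : ca_add (ca_sub x y) (ca_sub y z) = ca_sub x z.
Proof.
  unfold ca_sub. rewrite <- ca_addA. f_equal.
  rewrite ca_addA, (ca_addC _ y), ca_addN, ca_add0l. reflexivity.
Qed.

Lemma ca_subrr (x : A) : ca_sub x x = ca_zero.
Proof. apply ca_addN. Qed.

Lemma ca_scalBr (c : Cplx) (x y : A) : ca_sub (ca_scal c x) (ca_scal c y) = ca_scal c (ca_sub x y).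
Proof.
  unfold ca_sub. rewrite ca_scalDr, !ca_oppE, !ca_scalA. do 2 f_equal. Cplx_eq.
Qed.

Lemma ca_sub_addD (a b c d : A) : ca_sub (ca_add a b) (ca_add c d) = ca_add (ca_sub a c) (ca_sub b d).
Proof.
  unfold ca_sub. rewrite ca_oppD, <- !ca_addA. f_equal.
  rewrite (ca_addC b), <- ca_addA. f_equal. apply ca_addC.
Qed.

Lemma ca_mul_self_sub (Y Z : A) :
  ca_sub (ca_mul Y Y) (ca_mul Z Z) = ca_add (ca_mul Y (ca_sub Y Z)) (ca_mul (ca_sub Y Z) Z).
Proof.
  unfold ca_sub at 2 3. rewrite ca_mulDr, ca_mulDl, ca_mulrN, ca_mulNr.
  apply eq_sym, ca_subKr.
Qed.

Lemma ca_norm0 : ca_norm (@ca_zero A) = 0.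
Proof. rewrite <- (ca_scal0 ca_zero), ca_normZ, Cabs_C0. ring. Qed.

Lemma ca_normN (x : A) : ca_norm (ca_opp x) = ca_norm x.
Proof. rewrite ca_oppE, ca_normZ, Cabs_CofR, Rabs_left by lra. ring. Qed.

Lemma ca_norm_subC (x y : A) : ca_norm (ca_sub x y) = ca_norm (ca_sub y x).
Proof. unfold ca_sub. rewrite <- ca_normN, ca_oppD, ca_oppK, ca_addC. reflexivity. Qed.

Lemma ca_norm_sub_triangle (x y z : A) :
  ca_norm (ca_sub x z) <= ca_norm (ca_sub x y) + ca_norm (ca_sub y z).
Proof. rewrite <- (ca_subKr x y z). apply ca_norm_triangle. Qed.

Lemma ca_norm_star (x : A) : ca_norm (ca_star x) = ca_norm x.
Proof.
  assert (L : forall y : A, ca_norm y <= ca_norm (ca_star y)).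
  { intro y. pose proof (ca_cstar y). pose proof (ca_normM (ca_star y) y).
    pose proof (ca_norm_ge0 y). pose proof (ca_norm_ge0 (ca_star y)).
    destruct (Req_dec (ca_norm y) 0) as [Z|NZ]; [lra|].
    apply (Rmult_le_reg_r (ca_norm y)); nra. }
  apply Rle_antisym; [rewrite <- (ca_starK x) at 2|]; apply L.
Qed.

Lemma ca_norm_sandwich (c d : A) :
  ca_norm (ca_mul (ca_mul (ca_star d) (ca_mul (ca_star c) c)) d)
  = ca_norm (ca_mul c d) * ca_norm (ca_mul c d).
Proof. rewrite <- ca_cstar, ca_starM, !ca_mulA. reflexivity. Qed.

End CStarAlgebraTheory.


Section Convergence.
Context {A : CStarAlgebra}.

Definition ca_cvg (u : nat -> A) (l : A) : Prop :=
  forall eps, eps > 0 -> exists N, forall n, (n >= N)%nat -> ca_norm (ca_sub (u n) l) < eps.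

Lemma ca_cvg_unique (u : nat -> A) (l1 l2 : A) : ca_cvg u l1 -> ca_cvg u l2 -> l1 = l2.
Proof.
  intros Hl1 Hl2.
  assert (Z : ca_norm (ca_sub l1 l2) = 0).
  { apply Rle_antisym; [| apply ca_norm_ge0]. apply Rnot_lt_le; intro P.
    destruct (Hl1 (ca_norm (ca_sub l1 l2) / 2)) as [N1 HN1]; [lra|].
    destruct (Hl2 (ca_norm (ca_sub l1 l2) / 2)) as [N2 HN2]; [lra|].
    specialize (HN1 (max N1 N2) (Nat.le_max_l _ _)).
    specialize (HN2 (max N1 N2) (Nat.le_max_r _ _)).
    pose proof (ca_norm_sub_triangle l1 (u (max N1 N2)) l2) as T.
    rewrite (ca_norm_subC l1 (u (max N1 N2))) in T. lra. }
  apply ca_norm_eq0 in Z. unfold ca_sub in Z.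
  rewrite <- (ca_add0l l2), <- Z, <- ca_addA, (ca_addC (ca_opp l2)), ca_addN.
  symmetry. apply ca_add0.
Qed.

Lemma ca_cvg_norm_le (u : nat -> A) (l : A) (r : R) :
  ca_cvg u l -> (forall n, ca_norm (u n) <= r) -> ca_norm l <= r.
Proof.
  intros Hu Hb. apply Rnot_lt_le. intro P.
  destruct (Hu (ca_norm l - r)) as [N HN]; [lra|].
  specialize (HN N (le_n _)). specialize (Hb N).
  pose proof (ca_norm_sub_triangle l (u N) ca_zero) as T.
  rewrite !ca_subr0, (ca_norm_subC l) in T. lra.
Qed.

Lemma ca_cvg_star (u : nat -> A) (l : A) :
  ca_cvg u l -> ca_cvg (fun n => ca_star (u n)) (ca_star l).
Proof.
  intros Hu eps Heps. destruct (Hu eps Heps) as [N HN]. exists N. intros n Hn.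
  rewrite <- ca_star_sub, ca_norm_star. auto.
Qed.

Lemma geometric_sum_le (r : R) (u : nat -> A) :
  0 <= r < 1 -> (forall n, ca_norm (ca_sub (u (S n)) (u n)) <= r ^ n) ->
  forall n k, ca_norm (ca_sub (u (k + n)%nat) (u n)) <= (r ^ n - r ^ (k + n)) / (1 - r).
Proof.
  intros Hr Hstep n k. induction k as [|k IH].
  - simpl. unfold ca_sub. rewrite ca_addN, ca_norm0. unfold Rdiv. lra.
  - eapply Rle_trans; [rewrite <- (ca_subKr _ (u (k + n)%nat)); apply ca_norm_triangle|].
    specialize (Hstep (k + n)%nat). simpl plus. simpl pow.
    replace ((r ^ n - r * r ^ (k + n)) / (1 - r))
      with (r ^ (k + n) + (r ^ n - r ^ (k + n)) / (1 - r)) by (field; lra).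
    lra.
Qed.

Lemma ca_cvg_geometric (r : R) (u : nat -> A) :
  0 <= r < 1 -> (forall n, ca_norm (ca_sub (u (S n)) (u n)) <= r ^ n) ->
  exists l, ca_cvg u l.
Proof.
  intros Hr Hstep.
  assert (Hcauchy : forall n m, (m >= n)%nat -> ca_norm (ca_sub (u m) (u n)) <= r ^ n / (1 - r)).
  { intros n m Hmn. replace m with ((m - n) + n)%nat by lia.
    eapply Rle_trans; [apply (geometric_sum_le r u Hr Hstep)|].
    unfold Rdiv. apply Rmult_le_compat_r; [left; apply Rinv_0_lt_compat; lra|].
    pose proof (pow_le r (m - n + n) (proj1 Hr)). lra. }
  apply ca_complete. intros eps Heps.
  destruct (pow_lt_1_zero r ltac:(rewrite Rabs_right; lra) (eps * (1 - r)))
    as [N HN]; [apply Rmult_lt_0_compat; lra|].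
  assert (Hsmall : forall k, (k >= N)%nat -> r ^ k / (1 - r) < eps).
  { intros k Hk. specialize (HN k Hk). rewrite Rabs_right in HN by (apply Rle_ge, pow_le; lra).
    apply (Rmult_lt_reg_r (1 - r)); [lra|]. unfold Rdiv.
    rewrite Rmult_assoc, Rinv_l, Rmult_1_r by lra. lra. }
  exists N. intros m n Hm Hn. change (ca_norm (ca_sub (u m) (u n)) < eps).
  destruct (Nat.le_ge_cases m n).
  - rewrite ca_norm_subC. eapply Rle_lt_trans; [apply Hcauchy; lia | apply Hsmall; lia].
  - eapply Rle_lt_trans; [apply Hcauchy; lia | apply Hsmall; lia].
Qed.

End Convergence.

(* For a self-adjoint [h] with [||h|| < 1], the fixed point [y] of [Y |-> (h + Y^2)/2]
   gives [(1 - y)^* (1 - y) = 1 - h].  The map is an [r]-contraction of the ball of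
   radius [r = 1 - sqrt (1 - ||h||)], the smaller root of [r = (||h|| + r^2)/2]. *)
Section SquareRoot.
Context {A : CStarAlgebra}.

Definition sqrt_step (h Y : A) : A := ca_scal (CofR (1/2)) (ca_add h (ca_mul Y Y)).

Fixpoint sqrt_iter (h : A) (n : nat) : A :=
  match n with O => ca_zero | S k => sqrt_step h (sqrt_iter h k) end.

Lemma ca_norm_half (x : A) : ca_norm (ca_scal (CofR (1/2)) x) = / 2 * ca_norm x.
Proof. rewrite ca_normZ, Cabs_CofR, Rabs_right; lra. Qed.

Lemma sqrt_step_norm_le (h Y : A) (r : R) : ca_norm Y <= r -> 0 <= r ->
  ca_norm (sqrt_step h Y) <= (ca_norm h + r * r) / 2.
Proof.
  intros HY Hr. unfold sqrt_step. rewrite ca_norm_half.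
  pose proof (ca_norm_triangle h (ca_mul Y Y)). pose proof (ca_normM Y Y).
  pose proof (ca_norm_ge0 Y). nra.
Qed.

Lemma sqrt_step_lipschitz (h Y Z : A) (r : R) : ca_norm Y <= r -> ca_norm Z <= r ->
  ca_norm (ca_sub (sqrt_step h Y) (sqrt_step h Z)) <= r * ca_norm (ca_sub Y Z).
Proof.
  intros HY HZ. unfold sqrt_step.
  rewrite ca_scalBr, ca_norm_half, ca_sub_addD, ca_subrr, ca_add0l, ca_mul_self_sub.
  pose proof (ca_norm_triangle (ca_mul Y (ca_sub Y Z)) (ca_mul (ca_sub Y Z) Z)).
  pose proof (ca_normM Y (ca_sub Y Z)). pose proof (ca_normM (ca_sub Y Z) Z).
  pose proof (ca_norm_ge0 Y). pose proof (ca_norm_ge0 Z). pose proof (ca_norm_ge0 (ca_sub Y Z)).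
  nra.
Qed.

Variable h : A.
Hypothesis h_selfadjoint : ca_star h = h.
Hypothesis h_norm_lt1 : ca_norm h < 1.

Let r := 1 - sqrt (1 - ca_norm h).

Lemma sqrt_radius_bounds : 0 <= r < 1 /\ (ca_norm h + r * r) / 2 = r.
Proof.
  unfold r. pose proof (ca_norm_ge0 h).
  assert (Hsq : sqrt (1 - ca_norm h) * sqrt (1 - ca_norm h) = 1 - ca_norm h)
    by (apply sqrt_sqrt; lra).
  assert (0 < sqrt (1 - ca_norm h)) by (apply sqrt_lt_R0; lra).
  assert (sqrt (1 - ca_norm h) <= 1).
  { rewrite <- sqrt_1 at 2. apply sqrt_le_1_alt. lra. }
  split; [lra|].
  replace ((1 - sqrt (1 - ca_norm h)) * (1 - sqrt (1 - ca_norm h)))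
    with (1 - 2 * sqrt (1 - ca_norm h) + sqrt (1 - ca_norm h) * sqrt (1 - ca_norm h)) by ring.
  rewrite Hsq. field.
Qed.

Lemma sqrt_iter_norm_le n : ca_norm (sqrt_iter h n) <= r.
Proof.
  destruct sqrt_radius_bounds as [Hr Hfix].
  induction n as [|n IH]; simpl.
  - rewrite ca_norm0. lra.
  - rewrite <- Hfix. apply sqrt_step_norm_le; lra.
Qed.

Lemma sqrt_iter_step_le n :
  ca_norm (ca_sub (sqrt_iter h (S n)) (sqrt_iter h n)) <= r ^ n.
Proof.
  destruct sqrt_radius_bounds as [Hr _].
  induction n as [|n IH].
  - simpl sqrt_iter. rewrite ca_subr0. pose proof (sqrt_iter_norm_le 1). simpl in *. lra.
  - change (sqrt_iter h (S (S n))) with (sqrt_step h (sqrt_iter h (S n))).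
    change (sqrt_iter h (S n)) with (sqrt_step h (sqrt_iter h n)) at 2.
    eapply Rle_trans; [apply sqrt_step_lipschitz; apply sqrt_iter_norm_le|].
    change (r ^ S n) with (r * r ^ n). apply Rmult_le_compat_l; lra.
Qed.

Lemma sqrt_iter_selfadjoint n : ca_star (sqrt_iter h n) = sqrt_iter h n.
Proof.
  induction n as [|n IH]; simpl; [apply ca_star0|].
  unfold sqrt_step. rewrite ca_starZ, ca_starD, ca_starM, IH, h_selfadjoint.
  f_equal. Cplx_eq.
Qed.

Lemma one_sub_fixpoint_square (y : A) : ca_star y = y -> ca_add y y = ca_add h (ca_mul y y) ->
  ca_mul (ca_star (ca_sub ca_one y)) (ca_sub ca_one y) = ca_sub ca_one h.
Proof.
  intros Hy E. rewrite ca_star_sub, ca_star1, Hy.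
  unfold ca_sub. rewrite ca_mulDl, !ca_mulDr.
  repeat rewrite ?ca_mul1l, ?ca_mul1r, ?ca_mulNr, ?ca_mulrN, ?ca_oppK.
  rewrite <- ca_addA. f_equal.
  apply (ca_addI (ca_add y y)). rewrite E at 2.
  rewrite ca_addA, <- (ca_addA y y (ca_opp y)), ca_addN, ca_add0, ca_addA, ca_addN, ca_add0l.
  rewrite (ca_addC h (ca_mul y y)), <- ca_addA, ca_addN, ca_add0. reflexivity.
Qed.

Lemma one_sub_selfadjoint_square : exists d : A, ca_mul (ca_star d) d = ca_sub ca_one h.
Proof.
  destruct sqrt_radius_bounds as [Hr _].
  destruct (ca_cvg_geometric r (sqrt_iter h) Hr sqrt_iter_step_le) as [y Hy].
  assert (Hyr : ca_norm y <= r) by exact (ca_cvg_norm_le _ _ _ Hy sqrt_iter_norm_le).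
  assert (Hfix : y = sqrt_step h y).
  { apply (ca_cvg_unique (fun n => sqrt_iter h (S n))).
    - intros eps Heps. destruct (Hy eps Heps) as [N HN]. exists N. intros n Hn. apply HN. lia.
    - intros eps Heps. destruct (Hy eps Heps) as [N HN]. exists N. intros n Hn. simpl.
      eapply Rle_lt_trans; [apply sqrt_step_lipschitz; [apply sqrt_iter_norm_le | exact Hyr]|].
      specialize (HN n Hn). pose proof (ca_norm_ge0 (ca_sub (sqrt_iter h n) y)). nra. }
  assert (Hsa : ca_star y = y).
  { apply (ca_cvg_unique (sqrt_iter h)); [|exact Hy].
    intros eps Heps. destruct (ca_cvg_star _ _ Hy eps Heps) as [N HN].
    exists N. intros n Hn. rewrite <- sqrt_iter_selfadjoint. apply HN, Hn. }
  exists (ca_sub ca_one y). apply one_sub_fixpoint_square; [exact Hsa|].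
  rewrite Hfix at 1 2. unfold sqrt_step. rewrite <- ca_scalDl.
  replace (Cadd (CofR (1/2)) (CofR (1/2))) with Defs.C1 by Cplx_eq. apply ca_scal1.
Qed.

End SquareRoot.

Lemma Rle_mul_sqr_of_forall_gt (X Y k : R) : 0 <= k -> 0 <= Y ->
  (forall s, s > k -> X <= s * s * Y) -> X <= k * k * Y.
Proof.
  intros Hk HY Hs. destruct (Req_dec Y 0) as [Y0|Y0].
  - specialize (Hs (k + 1) ltac:(lra)). subst. lra.
  - apply Rnot_lt_le. intro Hc.
    set (t := (X / Y + k * k) / 2).
    assert (Hkt : k * k < t).
    { assert (k * k < X / Y).
      { apply (Rmult_lt_reg_r Y); [lra|]. replace (X / Y * Y) with X by (field; lra). lra. }
      unfold t. lra. }
    assert (HtX : t * Y < X).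
    { unfold t. replace ((X / Y + k * k) / 2 * Y) with ((X + k * k * Y) / 2) by (field; lra). lra. }
    assert (Hsk : sqrt t > k).
    { rewrite <- (sqrt_Rsqr k Hk). apply sqrt_lt_1_alt. unfold Rsqr. split; nra. }
    specialize (Hs (sqrt t) Hsk). rewrite sqrt_sqrt in Hs by nra. lra.
Qed.

Section PositiveFunctional.
Context {A : CStarAlgebra} (f : A -> Cplx).
Hypothesis f_add : forall a b, f (ca_add a b) = Cadd (f a) (f b).
Hypothesis f_scal : forall c a, f (ca_scal c a) = Cmul c (f a).
Hypothesis f_pos : forall z, 0 <= Cre (f (ca_mul (ca_star z) z)).

(* For [s > ||c||], [1 - c^* c / s^2] is a square. *)
Lemma positive_functional_bound_gt (c : A) (s : R) : s > ca_norm c ->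
  Cre (f (ca_mul (ca_star c) c)) <= s * s * Cre (f ca_one).
Proof.
  intros Hs. pose proof (ca_norm_ge0 c).
  assert (Hinv : 0 < / (s * s)) by (apply Rinv_0_lt_compat; nra).
  set (h := ca_scal (CofR (/ (s * s))) (ca_mul (ca_star c) c)).
  assert (Hsa : ca_star h = h).
  { unfold h. rewrite ca_starZ, ca_starM, ca_starK. f_equal. Cplx_eq. }
  assert (Hnorm : ca_norm h < 1).
  { unfold h. rewrite ca_normZ, ca_cstar, Cabs_CofR, Rabs_right by lra.
    apply (Rmult_lt_reg_r (s * s)); [nra|].
    replace (/ (s * s) * (ca_norm c * ca_norm c) * (s * s)) with (ca_norm c * ca_norm c)
      by (field; nra). nra. }
  destruct (one_sub_selfadjoint_square h Hsa Hnorm) as [d Hd].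
  pose proof (f_pos d) as P. rewrite Hd in P. unfold ca_sub, h in P.
  rewrite f_add, ca_oppE, f_scal, f_scal in P. simpl in P.
  apply (Rmult_le_reg_r (/ (s * s))); [exact Hinv|].
  replace (s * s * Cre (f ca_one) * / (s * s)) with (Cre (f ca_one)) by (field; nra). nra.
Qed.

Lemma positive_functional_bound (c : A) :
  Cre (f (ca_mul (ca_star c) c)) <= ca_norm c * ca_norm c * Cre (f ca_one).
Proof.
  apply Rle_mul_sqr_of_forall_gt; [apply ca_norm_ge0 | | apply positive_functional_bound_gt].
  rewrite <- ca_mul1l, <- ca_star1 at 1. apply f_pos.
Qed.

End PositiveFunctional.

Section HilbertSpaceTheory.
Context {H : HilbertSpace}.

Definition hs_sub (x y : H) : H := hs_add x (hs_opp y).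

Definition rinner (x y : H) : R := Cre (hs_inner x y).

Lemma hs_add0l (x : H) : hs_add hs_zero x = x.
Proof. rewrite hs_addC. apply hs_add0. Qed.

Lemma hs_addI (x y z : H) : hs_add x y = hs_add x z -> y = z.
Proof.
  intros E. rewrite <- (hs_add0l y), <- (hs_add0l z), <- (hs_addN x), (hs_addC x (hs_opp x)).
  rewrite <- !hs_addA, E. reflexivity.
Qed.

Lemma hs_scal0 (x : H) : hs_scal C0 x = hs_zero.
Proof. apply (hs_addI (hs_scal C0 x)). rewrite hs_add0, <- hs_scalDl. f_equal. Cplx_eq. Qed.

Lemma hs_oppE (x : H) : hs_opp x = hs_scal (CofR (-1)) x.
Proof.
  apply (hs_addI x). rewrite hs_addN. rewrite <- (hs_scal1 x) at 1.
  rewrite <- hs_scalDl, <- (hs_scal0 x). f_equal. Cplx_eq.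
Qed.

Lemma hs_subK (x y : H) : hs_add (hs_sub x y) y = x.
Proof. unfold hs_sub. rewrite <- hs_addA, (hs_addC (hs_opp y)), hs_addN. apply hs_add0. Qed.

Lemma hs_subKr (x y : H) : hs_sub x (hs_sub x y) = y.
Proof.
  unfold hs_sub. rewrite !hs_oppE, hs_scalDr, hs_scalA.
  replace (Cmul (CofR (-1)) (CofR (-1))) with Defs.C1 by Cplx_eq.
  rewrite hs_scal1, hs_addA, <- hs_oppE, hs_addN. apply hs_add0l.
Qed.

Lemma hs_inner0l (y : H) : hs_inner hs_zero y = C0.
Proof. rewrite <- (hs_scal0 hs_zero), hs_innerZ. Cplx_eq. Qed.

Lemma hs_inner0r (y : H) : hs_inner y hs_zero = C0.
Proof. rewrite hs_inner_conj, hs_inner0l. Cplx_eq. Qed.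

Lemma hs_innerDr (x y z : H) : hs_inner x (hs_add y z) = Cadd (hs_inner x y) (hs_inner x z).
Proof. rewrite hs_inner_conj, hs_innerD, (hs_inner_conj y x), (hs_inner_conj z x). Cplx_eq. Qed.

Lemma hs_innerZr (c : Cplx) (x y : H) : hs_inner x (hs_scal c y) = Cmul (Cconj c) (hs_inner x y).
Proof. rewrite hs_inner_conj, hs_innerZ, (hs_inner_conj y x). Cplx_eq. Qed.

Lemma hs_innerNl (x y : H) : hs_inner (hs_opp x) y = Cmul (CofR (-1)) (hs_inner x y).
Proof. rewrite hs_oppE, hs_innerZ. reflexivity. Qed.

Lemma hs_innerNr (x y : H) : hs_inner x (hs_opp y) = Cmul (CofR (-1)) (hs_inner x y).
Proof. rewrite hs_oppE, hs_innerZr. f_equal. Cplx_eq. Qed.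

Lemma hs_inner_self_im (x : H) : Cim (hs_inner x x) = 0.
Proof. pose proof (f_equal Cim (hs_inner_conj x x)). simpl in *. lra. Qed.

Lemma hnorm_ge0 (x : H) : 0 <= hnorm x.
Proof. apply sqrt_pos. Qed.

Lemma rinner_self (x : H) : rinner x x = hnorm x * hnorm x.
Proof. symmetry. apply sqrt_sqrt, hs_inner_pos. Qed.

Lemma rinnerC (x y : H) : rinner x y = rinner y x.
Proof. unfold rinner. rewrite hs_inner_conj. reflexivity. Qed.

Lemma rinnerDl (x y z : H) : rinner (hs_add x y) z = rinner x z + rinner y z.
Proof. unfold rinner. rewrite hs_innerD. reflexivity. Qed.

Lemma rinnerDr (x y z : H) : rinner x (hs_add y z) = rinner x y + rinner x z.
Proof. unfold rinner. rewrite hs_innerDr. reflexivity. Qed.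

Lemma rinnerNl (x y : H) : rinner (hs_opp x) y = - rinner x y.
Proof. unfold rinner. rewrite hs_innerNl. simpl. ring. Qed.

Lemma rinnerNr (x y : H) : rinner x (hs_opp y) = - rinner x y.
Proof. unfold rinner. rewrite hs_innerNr. simpl. ring. Qed.

Lemma rinnerBl (x y z : H) : rinner (hs_sub x y) z = rinner x z - rinner y z.
Proof. unfold hs_sub. rewrite rinnerDl, rinnerNl. ring. Qed.

Lemma rinnerBr (x y z : H) : rinner x (hs_sub y z) = rinner x y - rinner x z.
Proof. rewrite rinnerC, rinnerBl, !(rinnerC x). reflexivity. Qed.

Lemma rinnerZr (c : Cplx) (x y : H) :
  rinner x (hs_scal c y) = Cre c * Cre (hs_inner x y) + Cim c * Cim (hs_inner x y).
Proof. unfold rinner. rewrite hs_innerZr. destruct c. simpl. ring. Qed.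

Lemma rinnerZ (c : Cplx) (x y : H) :
  rinner (hs_scal c x) (hs_scal c y) = (Cre c * Cre c + Cim c * Cim c) * rinner x y.
Proof. unfold rinner. rewrite hs_innerZ, hs_innerZr. destruct c. simpl. ring. Qed.

Lemma rinnerRl (t : R) (x y : H) : rinner (hs_scal (CofR t) x) y = t * rinner x y.
Proof. unfold rinner. rewrite hs_innerZ. simpl. ring. Qed.

Lemma rinnerRr (t : R) (x y : H) : rinner x (hs_scal (CofR t) y) = t * rinner x y.
Proof. rewrite rinnerZr. simpl. unfold rinner. ring. Qed.

Lemma rinner_le (x y : H) : rinner x y <= hnorm x * hnorm y.
Proof.
  assert (Q : forall t, 0 <= hnorm x * hnorm x + 2 * t * rinner x y + t * t * (hnorm y * hnorm y)).
  { intro t. pose proof (hs_inner_pos (hs_add x (hs_scal (CofR t) y))) as P.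
    change (0 <= rinner (hs_add x (hs_scal (CofR t) y)) (hs_add x (hs_scal (CofR t) y))) in P.
    rewrite rinnerDl, !rinnerDr, !rinnerRl, !rinnerRr, !rinner_self, (rinnerC y x) in P. nra. }
  pose proof (hnorm_ge0 x). pose proof (hnorm_ge0 y).
  destruct (Req_dec (hnorm y) 0) as [Y0|Y0].
  - destruct (Rle_dec (rinner x y) 0); [nra|].
    specialize (Q (- (hnorm x * hnorm x + 1) / (2 * rinner x y))).
    rewrite Y0 in Q. replace (2 * (- (hnorm x * hnorm x + 1) / (2 * rinner x y)) * rinner x y)
      with (- (hnorm x * hnorm x + 1)) in Q by (field; lra). nra.
  - specialize (Q (- rinner x y / (hnorm y * hnorm y))).
    replace (hnorm x * hnorm x + 2 * (- rinner x y / (hnorm y * hnorm y)) * rinner x y +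
      - rinner x y / (hnorm y * hnorm y) * (- rinner x y / (hnorm y * hnorm y)) * (hnorm y * hnorm y))
      with (hnorm x * hnorm x - rinner x y * rinner x y * / (hnorm y * hnorm y)) in Q by (field; lra).
    assert (rinner x y * rinner x y <= (hnorm x * hnorm y) * (hnorm x * hnorm y)).
    { apply (Rmult_le_reg_r (/ (hnorm y * hnorm y))); [apply Rinv_0_lt_compat; nra|].
      replace (hnorm x * hnorm y * (hnorm x * hnorm y) * / (hnorm y * hnorm y))
        with (hnorm x * hnorm x) by (field; lra). lra. }
    destruct (Rle_dec (rinner x y) 0); [nra|].
    apply Rle_of_sqr_le; nra.
Qed.

Lemma hnormZ (c : Cplx) (x : H) : hnorm (hs_scal c x) = Cabs c * hnorm x.
Proof.
  unfold hnorm, Cabs. rewrite <- sqrt_mult; [| nra | apply hs_inner_pos]. f_equal.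
  rewrite hs_innerZ, hs_innerZr. pose proof (hs_inner_self_im x) as I. destruct c as [a b]. simpl.
  rewrite I. ring.
Qed.

Lemma hnormN (x : H) : hnorm (hs_opp x) = hnorm x.
Proof. rewrite hs_oppE, hnormZ, Cabs_CofR, Rabs_left by lra. ring. Qed.

Lemma hnorm0 : hnorm (@hs_zero H) = 0.
Proof. unfold hnorm. rewrite hs_inner0l. simpl. apply sqrt_0. Qed.

Lemma hnorm_triangle (x y : H) : hnorm (hs_add x y) <= hnorm x + hnorm y.
Proof.
  pose proof (hnorm_ge0 x). pose proof (hnorm_ge0 y).
  pose proof (rinner_self (hs_add x y)) as E.
  rewrite rinnerDl, !rinnerDr, !rinner_self, (rinnerC y x) in E.
  pose proof (rinner_le x y). apply Rle_of_sqr_le; nra.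
Qed.

Lemma hnorm_sub_le (x y : H) : hnorm (hs_sub x y) <= hnorm x + hnorm y.
Proof. unfold hs_sub. rewrite <- (hnormN y). apply hnorm_triangle. Qed.

Lemma hs_sub_addBK (u v w : H) : hs_sub (hs_add u (hs_sub v w)) v = hs_sub u w.
Proof.
  unfold hs_sub. rewrite <- hs_addA. f_equal.
  rewrite (hs_addC v (hs_opp w)), <- hs_addA, hs_addN. apply hs_add0.
Qed.

Lemma hnorm_le_sub (u v : H) : hnorm u <= hnorm (hs_sub u v) + hnorm v.
Proof. rewrite <- (hs_subK u v) at 1. apply hnorm_triangle. Qed.

Lemma rinner_le_of_hnorm (x y : H) (bx b_y : R) :
  hnorm x <= bx -> hnorm y <= b_y -> rinner x y <= bx * b_y.
Proof.
  intros Hx Hy. pose proof (rinner_le x y).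
  pose proof (Rmult_le_compat _ _ _ _ (hnorm_ge0 x) (hnorm_ge0 y) Hx Hy). lra.
Qed.

End HilbertSpaceTheory.

Lemma Rle_mul_of_quadratic_ge0 (K a b : R) :
  (forall t, 0 <= t * t * K * a + b - 2 * t * K) -> 0 <= K -> 0 <= a -> K <= a * b.
Proof.
  intros Q HK Ha. pose proof (Q 0) as Q0.
  destruct (Req_dec K 0) as [K0|K0]; [subst; nra|].
  destruct (Req_dec a 0) as [A0|A0].
  - subst. specialize (Q ((b + 1) / (2 * K))).
    replace (2 * ((b + 1) / (2 * K)) * K) with (b + 1) in Q by (field; lra). nra.
  - specialize (Q (/ a)).
    replace (/ a * / a * K * a + b - 2 * / a * K) with (b - K / a) in Q by (field; lra).
    apply (Rmult_le_reg_r (/ a)); [apply Rinv_0_lt_compat; lra|].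
    replace (a * b * / a) with b by (field; lra). unfold Rdiv in Q. lra.
Qed.

Definition triple {T : Type} (x0 x1 x2 : T) (i : nat) : T :=
  match i with O => x0 | S O => x1 | _ => x2 end.

Section UnitalCompletelyPositive.
Context {A : CStarAlgebra} {H : HilbertSpace} (P : A -> H -> H).
Hypothesis hP : is_ucp P.

Lemma ucp_op_add a x y : P a (hs_add x y) = hs_add (P a x) (P a y).
Proof. destruct hP as [B _]. apply (proj1 (proj1 (B a))). Qed.

Lemma ucp_op_scal a c x : P a (hs_scal c x) = hs_scal c (P a x).
Proof. destruct hP as [B _]. apply (proj2 (proj1 (B a))). Qed.

Lemma ucp_add a b x : P (ca_add a b) x = hs_add (P a x) (P b x).
Proof. destruct hP as [_ [[L _] _]]. apply L. Qed.

Lemma ucp_scal c a x : P (ca_scal c a) x = hs_scal c (P a x).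
Proof. destruct hP as [_ [[_ L] _]]. apply L. Qed.

Lemma ucp_one x : P ca_one x = x.
Proof. destruct hP as [_ [_ [O _]]]. apply O. Qed.

Lemma ucp_op_zero a : P a hs_zero = hs_zero.
Proof. rewrite <- (hs_scal0 hs_zero) at 1. rewrite ucp_op_scal. apply hs_scal0. Qed.

Lemma ucp_op_opp a x : P a (hs_opp x) = hs_opp (P a x).
Proof. rewrite !hs_oppE. apply ucp_op_scal. Qed.

(* Complete positivity at the positive 3x3 matrix [t_i^* t_j], [t = (1, u, v)]. *)
Lemma ucp_pos3 (u v : A) (x0 x1 x2 : H) :
  let q := Csum 3 (fun i => Csum 3 (fun j =>
     hs_inner (P (ca_mul (ca_star (triple ca_one u v i)) (triple ca_one u v j)) (triple x0 x1 x2 j))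
              (triple x0 x1 x2 i))) in
  Cim q = 0 /\ 0 <= Cre q.
Proof.
  destruct hP as [_ [_ [_ Pos]]].
  apply (Pos 3%nat (fun i j => ca_mul (ca_star (triple ca_one u v i)) (triple ca_one u v j))).
  exists (fun k i => match k with O => triple ca_one u v i | _ => ca_zero end).
  intros i j _ _. simpl. rewrite !ca_star0, !ca_mul0l, !ca_add0, ca_add0l. reflexivity.
Qed.

Lemma ucp_star (u : A) (x y : H) : hs_inner (P (ca_star u) x) y = hs_inner x (P u y).
Proof.
  assert (Sa : forall z, Cim (hs_inner (P (ca_mul (ca_star u) u) z) z) = 0).
  { intro z. destruct (ucp_pos3 u ca_zero hs_zero z hs_zero) as [I _].
    simpl in I. rewrite !ucp_op_zero, !hs_inner0l, !hs_inner0r in I. simpl in I. lra. }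
  assert (Sb : forall x0 x1, Cim (hs_inner (P u x1) x0) + Cim (hs_inner (P (ca_star u) x0) x1) = 0).
  { intros x0 x1. destruct (ucp_pos3 u ca_zero x0 x1 hs_zero) as [I _].
    simpl in I. rewrite !ucp_op_zero, !hs_inner0l, !hs_inner0r in I. simpl in I.
    rewrite ca_star1, !ca_mul1l, !ca_mul1r, ucp_one, hs_inner_self_im, Sa in I. lra. }
  pose proof (Sb x y) as B1.
  pose proof (Sb x (hs_scal (mkC 0 1) y)) as B2.
  rewrite ucp_op_scal, hs_innerZ, hs_innerZr in B2. simpl in B2.
  rewrite (hs_inner_conj (P u y) x). apply Cplx_ext; simpl; lra.
Qed.

(* The 3x3 positivity with [x0 = -(P u x1 + P v x2)]. *)
Lemma ucp_schwarz (u v : A) (x1 x2 : H) :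
  0 <= (rinner (P (ca_mul (ca_star u) u) x1) x1 - hnorm (P u x1) * hnorm (P u x1))
     + (rinner (P (ca_mul (ca_star v) v) x2) x2 - hnorm (P v x2) * hnorm (P v x2))
     + 2 * (rinner (P (ca_mul (ca_star u) v) x2) x1 - rinner (P v x2) (P u x1)).
Proof.
  set (w := hs_add (P u x1) (P v x2)).
  destruct (ucp_pos3 u v (hs_opp w) x1 x2) as [_ R]. simpl in R.
  repeat match type of R with context [Cre (hs_inner ?a ?b)] => fold (rinner a b) in R end.
  rewrite ca_star1, !ca_mul1l, !ca_mul1r, ucp_one, !ucp_op_opp, !rinnerNl, !rinnerNr in R.
  assert (E1 : rinner (P (ca_star u) w) x1 = rinner w (P u x1))
    by (unfold rinner; rewrite ucp_star; reflexivity).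
  assert (E2 : rinner (P (ca_star v) w) x2 = rinner w (P v x2))
    by (unfold rinner; rewrite ucp_star; reflexivity).
  assert (E3 : rinner (P (ca_mul (ca_star v) u) x1) x2 = rinner (P (ca_mul (ca_star u) v) x2) x1).
  { unfold rinner. replace (ca_mul (ca_star v) u) with (ca_star (ca_mul (ca_star u) v))
      by (rewrite ca_starM, ca_starK; reflexivity).
    rewrite ucp_star. apply rinnerC. }
  rewrite E1, E2, E3 in R. unfold w in R.
  rewrite !rinnerDl, !rinnerDr, (rinnerC (P u x1) (P v x2)) in R.
  rewrite <- !rinner_self. lra.
Qed.

Definition schwarz_defect (u : A) (z : H) : R :=
  rinner (P (ca_mul (ca_star u) u) z) z - hnorm (P u z) * hnorm (P u z).

Lemma schwarz_defect_ge0 (u : A) (z : H) : 0 <= schwarz_defect u z.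
Proof.
  pose proof (ucp_schwarz u ca_zero z hs_zero) as S.
  rewrite !ucp_op_zero, hnorm0 in S. unfold rinner in S.
  rewrite ?hs_inner0l, ?hs_inner0r in S. unfold schwarz_defect, rinner. simpl in S. lra.
Qed.

Lemma schwarz_defectZ (u : A) (c : Cplx) (z : H) :
  schwarz_defect u (hs_scal c z) = (Cre c * Cre c + Cim c * Cim c) * schwarz_defect u z.
Proof. unfold schwarz_defect. rewrite <- !rinner_self, !ucp_op_scal, !rinnerZ. ring. Qed.

(* The Schwarz defect is a positive form, hence obeys Cauchy-Schwarz. *)
Lemma ucp_defect_cauchy_schwarz (u v : A) (eta zeta : H) :
  let g := hs_inner (hs_sub (P (ca_mul (ca_star u) v) eta) (P (ca_star u) (P v eta))) zeta in
  Cre g * Cre g + Cim g * Cim g <= schwarz_defect u zeta * schwarz_defect v eta.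
Proof.
  intro g.
  set (g1 := hs_inner (P (ca_mul (ca_star u) v) eta) zeta).
  set (g2 := hs_inner (P v eta) (P u zeta)).
  assert (Hg : g = Cadd g1 (Cmul (CofR (-1)) g2)).
  { unfold g, hs_sub. rewrite hs_innerD, hs_innerNl, ucp_star. reflexivity. }
  apply Rle_mul_of_quadratic_ge0; [| nra | apply schwarz_defect_ge0].
  intro t.
  pose proof (ucp_schwarz u v (hs_scal (mkC (- t * Cre g) (- t * Cim g)) zeta) eta) as S.
  fold (schwarz_defect u (hs_scal (mkC (- t * Cre g) (- t * Cim g)) zeta)) in S.
  fold (schwarz_defect v eta) in S.
  rewrite schwarz_defectZ, (ucp_op_scal u), !rinnerZr in S. fold g1 g2 in S.
  assert (Re : Cre g = Cre g1 - Cre g2) by (rewrite Hg; simpl; ring).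
  assert (Im : Cim g = Cim g1 - Cim g2) by (rewrite Hg; simpl; ring).
  simpl in S. rewrite Re, Im in *. nra.
Qed.

Lemma ucp_form_bound (x : H) (c : A) :
  rinner (P (ca_mul (ca_star c) c) x) x <= ca_norm c * ca_norm c * (hnorm x * hnorm x).
Proof.
  replace (hnorm x * hnorm x) with (Cre (hs_inner (P ca_one x) x))
    by (rewrite ucp_one; apply rinner_self).
  apply (positive_functional_bound (fun z => hs_inner (P z x) x)).
  - intros a b. rewrite ucp_add, hs_innerD. reflexivity.
  - intros d a. rewrite ucp_scal, hs_innerZ. reflexivity.
  - intro z. pose proof (schwarz_defect_ge0 z x). pose proof (hnorm_ge0 (P z x)).
    unfold schwarz_defect, rinner in *. nra.
Qed.

Lemma schwarz_defect_le (u : A) (z : H) :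
  schwarz_defect u z <= ca_norm u * ca_norm u * (hnorm z * hnorm z).
Proof.
  unfold schwarz_defect. pose proof (ucp_form_bound z u). pose proof (hnorm_ge0 (P u z)). nra.
Qed.

Lemma ucp_contractive (c : A) (x : H) : hnorm (P c x) <= ca_norm c * hnorm x.
Proof.
  pose proof (schwarz_defect_ge0 c x). pose proof (ucp_form_bound x c).
  unfold schwarz_defect in *. pose proof (hnorm_ge0 x). pose proof (ca_norm_ge0 c).
  apply Rle_of_sqr_le; nra.
Qed.

Lemma ucp_mul_defect_le (u v : A) (eta : H) :
  let e := hs_sub (P (ca_mul (ca_star u) v) eta) (P (ca_star u) (P v eta)) in
  hnorm e * hnorm e <= ca_norm u * ca_norm u * schwarz_defect v eta.
Proof.
  intro e. pose proof (ucp_defect_cauchy_schwarz u v eta e) as G. simpl in G. fold e in G.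
  rewrite hs_inner_self_im in G. fold (rinner e e) in G. rewrite rinner_self in G.
  pose proof (schwarz_defect_le u e). pose proof (schwarz_defect_ge0 v eta).
  pose proof (schwarz_defect_ge0 u e). pose proof (hnorm_ge0 e). pose proof (ca_norm_ge0 u).
  destruct (Req_dec (hnorm e) 0) as [Z|Z]; [rewrite Z; nra|].
  apply (Rmult_le_reg_r (hnorm e * hnorm e)); nra.
Qed.

End UnitalCompletelyPositive.

Section Representation.
Context {A : CStarAlgebra} {H : HilbertSpace} (p : A -> H -> H).
Hypothesis hp : is_unital_star_rep p.

Lemma rep_add a b x : p (ca_add a b) x = hs_add (p a x) (p b x).
Proof. destruct hp as [_ [[L _] _]]. apply L. Qed.

Lemma rep_scal c a x : p (ca_scal c a) x = hs_scal c (p a x).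
Proof. destruct hp as [_ [[_ L] _]]. apply L. Qed.

Lemma rep_mul a b x : p (ca_mul a b) x = p a (p b x).
Proof. destruct hp as [_ [_ [M _]]]. apply M. Qed.

Lemma rep_one x : p ca_one x = x.
Proof. destruct hp as [_ [_ [_ [O _]]]]. apply O. Qed.

Lemma rep_star a x y : hs_inner (p (ca_star a) x) y = hs_inner x (p a y).
Proof. destruct hp as [_ [_ [_ [_ S]]]]. apply S. Qed.

Lemma rep_sub a b x : p (ca_sub a b) x = hs_sub (p a x) (p b x).
Proof. unfold ca_sub, hs_sub. rewrite rep_add, ca_oppE, hs_oppE. rewrite rep_scal. reflexivity. Qed.

Lemma rep_contractive (c : A) (x : H) : hnorm (p c x) <= ca_norm c * hnorm x.
Proof.
  assert (E : forall z, Cre (hs_inner (p (ca_mul (ca_star z) z) x) x) = hnorm (p z x) * hnorm (p z x)).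
  { intro z. rewrite rep_mul, rep_star. apply rinner_self. }
  pose proof (positive_functional_bound (fun z => hs_inner (p z x) x)) as B.
  specialize (B ltac:(intros; cbv beta; rewrite rep_add, hs_innerD; reflexivity)
                ltac:(intros; cbv beta; rewrite rep_scal, hs_innerZ; reflexivity)
                ltac:(intro z; cbv beta; rewrite E; pose proof (hnorm_ge0 (p z x)); nra) c).
  cbv beta in B. rewrite E, rep_one in B. fold (rinner x x) in B. rewrite rinner_self in B.
  pose proof (hnorm_ge0 x). pose proof (ca_norm_ge0 c).
  apply Rle_of_sqr_le; nra.
Qed.

Lemma rep_adjoint (d : A) x y : hs_inner (p d x) y = hs_inner x (adjoint (p d) y).
Proof.
  revert x y. unfold adjoint. apply epsilon_spec. exists (p (ca_star d)).
  intros x y. rewrite <- rep_star, ca_starK. reflexivity.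
Qed.

End Representation.

Section State.
Context {A : CStarAlgebra} (psi : A -> Cplx).
Hypothesis hpsi : is_state psi.

Lemma state_add a b : psi (ca_add a b) = Cadd (psi a) (psi b).
Proof. apply (proj1 hpsi). Qed.

Lemma state_scal c a : psi (ca_scal c a) = Cmul c (psi a).
Proof. apply (proj1 (proj2 hpsi)). Qed.

Lemma state_pos z : Cim (psi (ca_mul (ca_star z) z)) = 0 /\ 0 <= Cre (psi (ca_mul (ca_star z) z)).
Proof. apply (proj1 (proj2 (proj2 hpsi))). Qed.

Lemma state_one : psi ca_one = Defs.C1.
Proof. apply (proj2 (proj2 (proj2 hpsi))). Qed.

Lemma state_opp a : psi (ca_opp a) = Cmul (CofR (-1)) (psi a).
Proof. rewrite ca_oppE. apply state_scal. Qed.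

Lemma Cabs_state_pos z : Cabs (psi (ca_mul (ca_star z) z)) = Cre (psi (ca_mul (ca_star z) z)).
Proof. destruct (state_pos z). apply Cabs_real; assumption. Qed.

Lemma state_bound (c : A) : Cre (psi (ca_mul (ca_star c) c)) <= ca_norm c * ca_norm c.
Proof.
  pose proof (positive_functional_bound psi state_add state_scal (fun z => proj2 (state_pos z)) c).
  rewrite state_one in *. simpl in *. lra.
Qed.

(* Positivity of [psi] at [(1 + i x)^* (1 + i x)]. *)
Lemma state_star_re (x : A) : Cre (psi (ca_star x)) = Cre (psi x).
Proof.
  destruct (state_pos (ca_add ca_one (ca_scal (mkC 0 1) x))) as [I _].
  rewrite ca_starD, ca_star1, ca_starZ, ca_mulDl, !ca_mulDr, ca_mul1l, ca_mul1r, ca_mul1l,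
    ca_scal_mull, ca_scal_mulr, ca_scalA, !state_add, !state_scal, state_one in I.
  destruct (state_pos x) as [I2 _]. simpl in I. rewrite I2 in I. lra.
Qed.

Lemma state_one_sub_sq (d : A) : ca_norm d <= 1 ->
  Cre (psi (ca_mul (ca_star (ca_sub ca_one d)) (ca_sub ca_one d))) <= 2 - 2 * Cre (psi d).
Proof.
  intro Hd. pose proof (state_bound d). pose proof (ca_norm_ge0 d).
  pose proof (state_star_re d).
  unfold ca_sub. rewrite ca_starD, ca_star1, ca_starN, ca_mulDl, !ca_mulDr, ca_mul1l, ca_mul1r,
    !ca_mulNr, !ca_mulrN, ca_oppK, ca_mul1l, !state_add, !state_opp, state_one.
  simpl. nra.
Qed.

End State.

Section Compression.
Context {A : CStarAlgebra} {H : HilbertSpace} (pi Pi : A -> H -> H).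
Hypothesis hpi : is_unital_star_rep pi.
Hypothesis hPi : is_ucp Pi.
Variables (Dm Dn : A) (r : R).
Hypothesis Dm_agree : forall y, Pi Dm y = pi Dm y.
Hypothesis Dm_norm : ca_norm Dm <= 1.
Hypothesis Dn_norm : ca_norm Dn <= 1.
Hypothesis defect_norm : ca_norm (ca_mul (ca_sub ca_one Dm) Dn) <= r.

Lemma schwarz_defect_agree_le (eta : H) :
  schwarz_defect Pi Dm eta <= 2 * hnorm (hs_sub eta (pi Dm eta)) * hnorm eta.
Proof.
  unfold schwarz_defect. rewrite Dm_agree.
  pose proof (hnorm_ge0 eta). pose proof (hnorm_ge0 (pi Dm eta)). pose proof (ca_norm_ge0 Dm).
  assert (B : rinner (Pi (ca_mul (ca_star Dm) Dm) eta) eta <= hnorm eta * hnorm eta).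
  { eapply Rle_trans; [apply (ucp_form_bound Pi hPi)|].
    rewrite <- (Rmult_1_l (hnorm eta * hnorm eta)) at 2.
    apply Rmult_le_compat_r; nra. }
  assert (C : hnorm (pi Dm eta) <= hnorm eta).
  { pose proof (rep_contractive pi hpi Dm eta). nra. }
  pose proof (hnorm_le_sub eta (pi Dm eta)). nra.
Qed.

Lemma compression_fixed_defect_le (x : H) :
  hnorm (hs_sub (pi Dn x) (pi Dm (pi Dn x))) <= r * hnorm x.
Proof.
  rewrite <- (rep_one pi hpi (pi Dn x)) at 1.
  rewrite <- (rep_sub pi hpi), <- (rep_mul pi hpi).
  pose proof (rep_contractive pi hpi (ca_mul (ca_sub ca_one Dm) Dn) x).
  pose proof (hnorm_ge0 x). nra.
Qed.

Lemma compression_schwarz_defect_le (x : H) :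
  schwarz_defect Pi Dm (pi Dn x) <= 2 * r * (hnorm x * hnorm x).
Proof.
  pose proof (hnorm_ge0 x). pose proof (ca_norm_ge0 Dn).
  assert (Hx : hnorm (pi Dn x) <= hnorm x).
  { pose proof (rep_contractive pi hpi Dn x). nra. }
  eapply Rle_trans; [apply schwarz_defect_agree_le|].
  replace (2 * r * (hnorm x * hnorm x)) with (2 * (r * hnorm x * hnorm x)) by ring.
  rewrite Rmult_assoc. apply Rmult_le_compat_l; [lra|].
  apply Rmult_le_compat; auto using hnorm_ge0, compression_fixed_defect_le.
Qed.

Lemma compression_mul_defect_le (a : A) (x : H) :
  hnorm (hs_sub (Pi (ca_mul a Dm) (pi Dn x)) (Pi a (Pi Dm (pi Dn x))))
  <= ca_norm a * sqrt (2 * r) * hnorm x.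
Proof.
  assert (Hr : 0 <= r) by (pose proof (ca_norm_ge0 (ca_mul (ca_sub ca_one Dm) Dn)); lra).
  pose proof (ucp_mul_defect_le Pi hPi (ca_star a) Dm (pi Dn x)) as G. simpl in G.
  rewrite ca_starK, ca_norm_star in G.
  pose proof (compression_schwarz_defect_le x). pose proof (sqrt_sqrt (2 * r) ltac:(lra)).
  pose proof (sqrt_pos (2 * r)). pose proof (ca_norm_ge0 a). pose proof (hnorm_ge0 x).
  apply Rle_of_sqr_le; [| repeat apply Rmult_le_pos; assumption].
  eapply Rle_trans; [exact G|].
  replace (ca_norm a * sqrt (2 * r) * hnorm x * (ca_norm a * sqrt (2 * r) * hnorm x))
    with (ca_norm a * ca_norm a * (2 * r * (hnorm x * hnorm x))) by nra.
  apply Rmult_le_compat_l; nra.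
Qed.

Lemma compression_mul_approx (a : A) (x : H) :
  hnorm (hs_sub (Pi a (pi Dn x)) (Pi (ca_mul a Dm) (pi Dn x)))
  <= ca_norm a * (r + sqrt (2 * r)) * hnorm x.
Proof.
  pose proof (compression_fixed_defect_le x). pose proof (compression_mul_defect_le a x).
  set (eta := pi Dn x) in *. set (theta := hs_sub eta (pi Dm eta)) in *.
  set (e := hs_sub (Pi (ca_mul a Dm) eta) (Pi a (Pi Dm eta))) in *.
  assert (E : Pi a eta = hs_add (Pi a theta) (hs_sub (Pi (ca_mul a Dm) eta) e)).
  { unfold e, theta. rewrite hs_subKr, Dm_agree, <- (ucp_op_add Pi hPi), hs_subK. reflexivity. }
  rewrite E, hs_sub_addBK.
  pose proof (hnorm_sub_le (Pi a theta) e).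
  pose proof (ucp_contractive Pi hPi a theta).
  pose proof (ca_norm_ge0 a). nra.
Qed.

Lemma compression_norm_le (a : A) (x : H) :
  hnorm (Pi a (pi Dn x)) <= (ca_norm (ca_mul a Dm) + ca_norm a * (r + sqrt (2 * r))) * hnorm x.
Proof.
  pose proof (hnorm_le_sub (Pi a (pi Dn x)) (Pi (ca_mul a Dm) (pi Dn x))).
  pose proof (compression_mul_approx a x).
  pose proof (hnorm_ge0 x). pose proof (ca_norm_ge0 Dn). pose proof (ca_norm_ge0 (ca_mul a Dm)).
  assert (hnorm (pi Dn x) <= hnorm x) by (pose proof (rep_contractive pi hpi Dn x); nra).
  assert (hnorm (Pi (ca_mul a Dm) (pi Dn x)) <= ca_norm (ca_mul a Dm) * hnorm x).
  { eapply Rle_trans; [apply (ucp_contractive Pi hPi)|]. apply Rmult_le_compat_l; assumption. }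
  lra.
Qed.

(* Compress on both sides: [Pi a ~ Pi (a D_m)], then move [D_m] across the inner product. *)
Lemma compression_inner_le (a : A) (x w : H) :
  rinner (Pi a (pi Dn x)) (pi Dn w)
  <= (ca_norm (ca_mul (ca_mul (ca_star Dm) a) Dm) + 2 * ca_norm a * (r + sqrt (2 * r)))
     * hnorm x * hnorm w.
Proof.
  set (b := ca_mul (ca_star Dm) (ca_star a)).
  assert (Hb : ca_norm b <= ca_norm a).
  { pose proof (ca_normM (ca_star Dm) (ca_star a)). rewrite !ca_norm_star in *.
    pose proof (ca_norm_ge0 a). unfold b. nra. }
  assert (Hbm : ca_norm (ca_mul b Dm) = ca_norm (ca_mul (ca_mul (ca_star Dm) a) Dm)).
  { unfold b. rewrite <- (ca_norm_star (ca_mul (ca_mul (ca_star Dm) a) Dm)), !ca_starM, ca_starK.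
    rewrite ca_mulA. reflexivity. }
  assert (E : rinner (Pi (ca_mul a Dm) (pi Dn x)) (pi Dn w) = rinner (pi Dn x) (Pi b (pi Dn w))).
  { unfold rinner. rewrite <- (ucp_star Pi hPi). unfold b. rewrite ca_starM, !ca_starK. reflexivity. }
  assert (Hr : 0 <= r) by (pose proof (ca_norm_ge0 (ca_mul (ca_sub ca_one Dm) Dn)); lra).
  pose proof (sqrt_pos (2 * r)).
  pose proof (hnorm_ge0 x). pose proof (hnorm_ge0 w). pose proof (ca_norm_ge0 a).
  pose proof (rep_contractive pi hpi Dn x). pose proof (rep_contractive pi hpi Dn w).
  pose proof (ca_norm_ge0 Dn).
  assert (Hx : hnorm (pi Dn x) <= hnorm x) by nra.
  assert (Hw : hnorm (pi Dn w) <= hnorm w) by nra.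
  pose proof (rinner_le_of_hnorm _ _ _ _ (compression_mul_approx a x) Hw) as T1.
  pose proof (rinner_le_of_hnorm _ _ _ _ Hx (compression_mul_approx b w)) as T2.
  assert (T3 : rinner (pi Dn x) (Pi (ca_mul b Dm) (pi Dn w))
               <= hnorm x * (ca_norm (ca_mul b Dm) * hnorm w)).
  { apply rinner_le_of_hnorm; [exact Hx|].
    pose proof (ucp_contractive Pi hPi (ca_mul b Dm) (pi Dn w)).
    pose proof (ca_norm_ge0 (ca_mul b Dm)). nra. }
  rewrite rinnerBl, E in T1. rewrite rinnerBr in T2. rewrite Hbm in T3.
  assert (ca_norm b * (r + sqrt (2 * r)) * (hnorm x * hnorm w)
          <= ca_norm a * (r + sqrt (2 * r)) * (hnorm x * hnorm w)).
  { apply Rmult_le_compat_r; [nra|]. apply Rmult_le_compat_r; lra. }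
  nra.
Qed.

End Compression.

Section CharacteristicSequence.
Context {A : CStarAlgebra} (psi : A -> Cplx) (D : nat -> A).
Hypothesis hpsi : is_state psi.
Hypothesis hD : is_characteristic_sequence psi D.

Lemma char_seq_norm_le1 n : ca_norm (D n) <= 1.
Proof. destruct hD as [hD1 _]. right. apply hD1. Qed.

Lemma char_seq_mul_le (a : A) (t : R) : t > 0 ->
  exists N, forall n, (n >= N)%nat ->
    ca_norm (ca_mul a (D n)) <= sqrt (Cre (psi (ca_mul (ca_star a) a))) + t.
Proof.
  intros Ht. destruct hD as [_ [_ [_ hD4]]].
  destruct (hD4 (ca_mul (ca_star a) a) (t * t)) as [N HN]; [nra|].
  exists N. intros n Hn. specialize (HN n Hn). simpl in HN.
  rewrite ca_norm_sandwich, (Cabs_state_pos psi hpsi) in HN.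
  destruct (state_pos psi hpsi a) as [_ HX].
  pose proof (sqrt_sqrt _ HX). pose proof (sqrt_pos (Cre (psi (ca_mul (ca_star a) a)))).
  apply Rle_of_sqr_le; nra.
Qed.

(* [||(1 - D_m) D_n||^2 <~ psi ((1 - D_m)^* (1 - D_m)) <= 2 - 2 Re psi (D_m)], small for large [m]. *)
Lemma char_seq_almost_fixed (t : R) (N0 : nat) : 0 < t ->
  exists m, (m >= N0)%nat /\ exists N, forall n, (n >= N)%nat ->
    ca_norm (ca_mul (ca_sub ca_one (D m)) (D n)) <= 2 * (t * t).
Proof.
  intros Ht. destruct hD as [_ [hD2 _]].
  destruct (hD2 (t * t * (t * t) / 2)) as [N2 HN2].
  { apply Rlt_gt, Rdiv_lt_0_compat; [|lra]. repeat apply Rmult_lt_0_compat; lra. }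
  set (m := max N0 N2). exists m. split; [lia|].
  specialize (HN2 m ltac:(lia)). unfold R_dist in HN2. apply Rabs_def2 in HN2.
  destruct (char_seq_mul_le (ca_sub ca_one (D m)) (t * t)) as [N HN]; [nra|].
  exists N. intros n Hn. eapply Rle_trans; [exact (HN n Hn)|].
  enough (sqrt (Cre (psi (ca_mul (ca_star (ca_sub ca_one (D m))) (ca_sub ca_one (D m)))))
          <= t * t) by lra.
  rewrite <- (sqrt_square (t * t)) by nra. apply sqrt_le_1_alt.
  pose proof (state_one_sub_sq psi hpsi (D m) (char_seq_norm_le1 m)). lra.
Qed.

End CharacteristicSequence.

Lemma choose_tolerance (Na eps : R) : 0 <= Na -> eps > 0 ->
  exists t, 0 < t <= 1 /\ t * (1 + 8 * Na) <= eps.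
Proof.
  intros HN He. exists (Rmin 1 (eps / (1 + 8 * Na))).
  assert (0 < eps / (1 + 8 * Na)) by (apply Rdiv_lt_0_compat; lra).
  split; [split; [apply Rmin_pos; lra | apply Rmin_l]|].
  eapply Rle_trans; [apply Rmult_le_compat_r; [lra | apply Rmin_r]|].
  right. field. lra.
Qed.

Lemma compression_error_le (t : R) : 0 < t <= 1 ->
  2 * (t * t) + sqrt (2 * (2 * (t * t))) <= 4 * t.
Proof.
  intros Ht. replace (2 * (2 * (t * t))) with ((2 * t) * (2 * t)) by ring.
  rewrite sqrt_square by lra. nra.
Qed.

Section CompressionLimits.
Context {A : CStarAlgebra} {H : HilbertSpace} (pi Pi : A -> H -> H)
  (psi : A -> Cplx) (D : nat -> A).
Hypothesis hpi : is_unital_star_rep pi.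
Hypothesis hPi : is_ucp Pi.
Hypothesis hpsi : is_state psi.
Hypothesis hD : is_characteristic_sequence psi D.
Hypothesis D_agree : forall n x, Pi (D n) x = pi (D n) x.

Lemma compression_norm_limsup_le (a : A) (eps : R) : eps > 0 ->
  exists N, forall n, (n >= N)%nat ->
    opnorm_le (fun x => Pi a (pi (D n) x)) (sqrt (Cre (psi (ca_mul (ca_star a) a))) + eps).
Proof.
  intros Heps. pose proof (ca_norm_ge0 a) as Ha.
  destruct (choose_tolerance (ca_norm a) eps Ha Heps) as [t [Ht Hte]].
  destruct (char_seq_mul_le psi D hpsi hD a t) as [N1 HN1]; [lra|].
  destruct (char_seq_almost_fixed psi D hpsi hD t N1) as [m [Hm [N HN]]]; [lra|].
  exists N. intros n Hn x.
  eapply Rle_trans.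
  { apply (compression_norm_le pi Pi hpi hPi (D m) (D n) (2 * (t * t)) (D_agree m)
      (char_seq_norm_le1 psi D hD m) (char_seq_norm_le1 psi D hD n) (HN n Hn)). }
  apply Rmult_le_compat_r; [apply hnorm_ge0|].
  pose proof (HN1 m Hm). pose proof (compression_error_le t Ht).
  assert (ca_norm a * (2 * (t * t) + sqrt (2 * (2 * (t * t)))) <= ca_norm a * (4 * t))
    by (apply Rmult_le_compat_l; lra).
  nra.
Qed.

Lemma compression_adjoint_limsup_le (a : A) (eps : R) : eps > 0 ->
  exists N, forall n, (n >= N)%nat ->
    opnorm_le (fun x => adjoint (pi (D n)) (Pi a (pi (D n) x))) (Cabs (psi a) + eps).
Proof.
  intros Heps. pose proof (ca_norm_ge0 a) as Ha.
  destruct (choose_tolerance (ca_norm a) eps Ha Heps) as [t [Ht Hte]].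
  destruct hD as [_ [_ [_ hD4]]].
  destruct (hD4 a t) as [N1 HN1]; [lra|].
  destruct (char_seq_almost_fixed psi D hpsi hD t N1) as [m [Hm [N HN]]]; [lra|].
  exists N. intros n Hn x. cbv beta.
  set (w := adjoint (pi (D n)) (Pi a (pi (D n) x))).
  assert (Hw : rinner (Pi a (pi (D n) x)) (pi (D n) w) = hnorm w * hnorm w).
  { rewrite <- rinner_self, rinnerC. unfold rinner. rewrite (rep_adjoint pi hpi). reflexivity. }
  pose proof (compression_inner_le pi Pi hpi hPi (D m) (D n) (2 * (t * t))
    (D_agree m) (char_seq_norm_le1 psi D hD m) (char_seq_norm_le1 psi D hD n) (HN n Hn) a x w) as E.
  rewrite Hw in E.
  apply Rle_of_sqr_le_mul; [apply hnorm_ge0 | pose proof (Cabs_ge0 (psi a)); pose proof (hnorm_ge0 x); nra |].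
  eapply Rle_trans; [exact E|].
  do 2 (apply Rmult_le_compat_r; [apply hnorm_ge0|]).
  pose proof (HN1 m Hm). simpl in *. pose proof (compression_error_le t Ht).
  assert (2 * ca_norm a * (2 * (t * t) + sqrt (2 * (2 * (t * t)))) <= 2 * ca_norm a * (4 * t))
    by (apply Rmult_le_compat_l; lra).
  nra.
Qed.

End CompressionLimits.

Theorem lemma5p1 (A : CStarAlgebra) (S : A -> Prop) (H : HilbertSpace)
  (pi Pi : A -> H -> H) (psi : A -> Cplx) (D : nat -> A)
  (hS : is_operator_system S)
  (hpi : is_unital_star_rep pi)
  (hPi : is_ucp Pi)
  (hagree : forall s, S s -> forall x, Pi s x = pi s x)
  (hpsi : is_state psi)
  (hD : is_characteristic_sequence psi D)
  (hDS : forall n, S (D n)) :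
  (forall a : A, forall eps, eps > 0 -> exists N, forall n, (n >= N)%nat ->
      opnorm_le (fun x => Pi a (pi (D n) x))
                (sqrt (Cre (psi (ca_mul (ca_star a) a))) + eps)) /\
  (forall a : A, ca_star a = a -> psi a = C0 ->
      forall eps, eps > 0 -> exists N, forall n, (n >= N)%nat ->
      opnorm_le (fun x => adjoint (pi (D n)) (Pi a (pi (D n) x))) eps).
Proof.
  assert (D_agree : forall n x, Pi (D n) x = pi (D n) x) by (intros; apply hagree, hDS).
  split.
  - intros a. exact (compression_norm_limsup_le pi Pi psi D hpi hPi hpsi hD D_agree a).
  - intros a _ Ha eps Heps.
    destruct (compression_adjoint_limsup_le pi Pi psi D hpi hPi hpsi hD D_agree a eps Heps)
      as [N HN].
    exists N. intros n Hn. rewrite Ha, Cabs_C0, Rplus_0_l in HN. exact (HN n Hn).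
Qed.
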